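(* Let $S\subseteq[4]$ be nonempty, let $d_1\in\{1,2\}$, and let real numbers $x_{k,j}$ with $0\le x_{k,j}\le\frac12$ be given for $1\le k\le d_1$ and $j\in S$. For $j\in S$ define $$f_j=\frac{\prod_{k=1}^{d_1}(1-x_{k,j})}{\sum_{w\in S}\prod_{k=1}^{d_1}(1-x_{k,w})}.$$ Then for every $i,j\in S$ it holds that $\frac14\le f_i/f_j\le 4$ and $f_i\ge\frac1{13}$. *)

From mathcomp Require Import all_boot all_order all_algebra.
From mathcomp Require Import reals.
Set Implicit Arguments. Unset Strict Implicit. Unset Printing Implicit Defensive.
Import Order.TTheory GRing.Theory Num.Theory.
Local Open Scope ring_scope.

(* [4] = {1,2,3,4} is represented by 'I_4 = {0,1,2,3}; k in 1..d1 by 'I_d1. *)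
Definition fval (R : realType) (d1 : nat) (S : {set 'I_4})
  (x : 'I_d1 -> 'I_4 -> R) (j : 'I_4) : R :=
  (\prod_(k < d1) (1 - x k j)) / (\sum_(w in S) \prod_(k < d1) (1 - x k w)).

From mathcomp Require Import all_boot all_order all_algebra.
From mathcomp Require Import reals.
From mathcomp Require Import ring lra.
Set Implicit Arguments. Unset Strict Implicit. Unset Printing Implicit Defensive.
Import Order.TTheory GRing.Theory Num.Theory.
Local Open Scope ring_scope.

(* Each weight [w_j = prod_k (1 - x_kj)] lies in [1/4, 1], since at most two
   factors each lie in [1/2, 1].  The normalisation cancels in [f_i / f_j],
   which is therefore a quotient of two numbers of [[1/4, 1]].  For the lower
   bound, [f_i = w_i / (w_i + r)] where the other weights add up to [r <= 3];
   this is smallest when [w_i = 1/4] and [r = 3], giving [1/13]. *)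

Lemma prod_one_minus_bounds (R : realFieldType) (I : finType) (a : I -> R) :
  (forall k, 0 <= a k <= 1 / 2) -> 2 ^- #|I| <= \prod_k (1 - a k) <= 1.
Proof.
move=> a_bd; apply/andP; split.
  rewrite -exprVn -prodr_const; apply: ler_prod => k _.
  by have /andP[? ?] := a_bd k; apply/andP; split; lra.
by apply: prodr_ile1 => k _; have /andP[? ?] := a_bd k; apply/andP; split; lra.
Qed.

Lemma ratio_bounds (R : realFieldType) (m a b : R) :
  0 < m -> m <= a <= 1 -> m <= b <= 1 -> m <= a / b <= m^-1.
Proof.
move=> m_gt0 /andP[ma a1] /andP[mb b1].
have b_gt0 : 0 < b by lra.
rewrite ler_pdivlMr // ler_pdivrMr //; apply/andP; split; first by nra.
by rewrite -(ler_pM2l m_gt0) mulrA divff ?gt_eqF // mul1r; nra.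
Qed.

Lemma divf_cancel_denom (R : fieldType) (a b s : R) : s != 0 -> a / s / (b / s) = a / b.
Proof. by move=> s_neq0; rewrite invf_div mulrA divfK. Qed.

Lemma share_lower_bound (R : realFieldType) (I : finType) (S : {pred I})
    (p : I -> R) (m : R) (n : nat) (i : I) :
  0 < m -> (#|S| <= n.+1)%N -> i \in S -> (forall w, w \in S -> m <= p w <= 1) ->
  m / (m + n%:R) <= p i / \sum_(w in S) p w.
Proof.
move=> m_gt0 cardS iS p_bd.
have /andP[mpi pi1] := p_bd i iS.
rewrite (bigD1 i iS) /=; set r := \sum_(w in S | w != i) p w.
have r_ge0 : 0 <= r.
  by apply: sumr_ge0 => w /andP[wS _]; have /andP[? ?] := p_bd w wS; lra.
have r_le_n : r <= n%:R.
  apply: (@le_trans _ _ (\sum_(w in S | w != i) 1)).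
    by apply: ler_sum => w /andP[wS _]; have /andP[] := p_bd w wS.
  have := sumr_const S (1 : R); rewrite (bigD1 i iS) /= => sum1.
  have : #|S|%:R <= n.+1%:R :> R by rewrite ler_nat.
  by rewrite -natr1 -sum1; lra.
rewrite ler_pdivrMr ?ltr_wpDr ?ler0n // mulrAC ler_pdivlMr; nra.
Qed.

Theorem proposition16 (R : realType) (S : {set 'I_4}) (d1 : nat)
  (x : 'I_d1 -> 'I_4 -> R) :
  S != set0 -> (d1 = 1%N \/ d1 = 2%N) ->
  (forall (k : 'I_d1) (j : 'I_4), j \in S -> 0 <= x k j /\ x k j <= 1 / 2) ->
  forall i j : 'I_4, i \in S -> j \in S ->
    1 / 4 <= fval S x i / fval S x j /\ fval S x i / fval S x j <= 4 /\
    1 / 13 <= fval S x i.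
Proof.
move=> _ d1_12 x_bd i j iS jS.
pose p w := \prod_(k < d1) (1 - x k w).
rewrite /fval -/(p i) -/(p j) -/(\sum_(w in S) p w).
have quarter_le : 1 / 4 <= 2 ^- d1 :> R by case: d1_12 => ->; lra.
have p_bd w : w \in S -> 1 / 4 <= p w <= 1.
  move=> wS; have /andP[lo hi] : 2 ^- #|'I_d1| <= p w <= 1.
    by apply: prod_one_minus_bounds => k; have [? ?] := x_bd k w wS; apply/andP.
  by rewrite card_ord in lo; apply/andP; split; lra.
have sum_neq0 : \sum_(w in S) p w != 0.
  rewrite (bigD1 i iS) /= lt0r_neq0 // ltr_pwDl ?sumr_ge0 //.
    by have /andP[? ?] := p_bd i iS; lra.
  by move=> w /andP[wS _]; have /andP[? ?] := p_bd w wS; lra.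
rewrite divf_cancel_denom //.
have quarter_gt0 : 0 < 1 / 4 :> R by lra.
have cardS : (#|S| <= 4)%N by have := max_card S; rewrite card_ord.
have /andP[ratio_lo ratio_hi] := ratio_bounds quarter_gt0 (p_bd i iS) (p_bd j jS).
have := share_lower_bound (n := 3) quarter_gt0 cardS iS p_bd.
rewrite [1 / 4 / _](_ : _ = 1 / 13); last by field.
rewrite invf_div divr1 in ratio_hi.
by split; [|split]; lra.
Qed.
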